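(* The class of diamond-weakly modular graphs is closed under gated amalgamation: if $G$ is a gated amalgam of two diamond-weakly modular graphs $G_1$ and $G_2$, then $G$ is diamond-weakly modular.
   Context: All graphs are finite, simple and connected; $d$ is the shortest-path distance and $I(a,b)=\{w: d(a,w)+d(w,b)=d(a,b)\}$. For $S\subseteq V(G)$ and a vertex $y$, a vertex $x\in S$ is a gate of $y$ in $S$ if $x\in I(y,w)$ for all $w\in S$; $S$ (or the subgraph it induces) is gated if every vertex has a gate in $S$. A graph $G$ is a gated amalgam of $G_1$ and $G_2$ if $G_1,G_2$ are gated subgraphs of $G$ with $G_1\cup G_2=G$, $G_1\cap G_2\ne\emptyset$, and there are no edges between $G_1\setminus G_2$ and $G_2\setminus G_1$ (equivalently, $G$ is obtained from $G_1$ and $G_2$ by identifying isomorphic gated subgraphs $H_1\subseteq G_1$, $H_2\subseteq G_2$). Quadrangle condition $(QC)$: for any four vertices $u,v,w,y$ with $d(v,y)=d(w,y)=1$ and $2=d(v,w)\le d(u,v)=d(u,w)=d(u,y)-1$, there exists a common neighbor $z$ of $v$ and $w$ with $d(u,z)=d(u,v)-1$. Triangle diamond condition $(TDC)$: for any three vertices $u,v,w$ with $1=d(v,w)<d(u,v)=d(u,w)$, there exists a common neighbor $z$ of $v$ and $w$ with $d(u,z)=d(u,v)-1$ such that $z$ is adjacent to every vertex $x$ with $d(x,v)=1$, $d(u,x)=d(u,v)-1$ and to every vertex $y$ with $d(y,w)=1$, $d(u,y)=d(u,w)-1$ (diamonds being $K_4$ minus an edge). A graph is diamond-weakly modular if it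 satisfies $(QC)$ and $(TDC)$. *)

From mathcomp Require Import all_boot all_order.
Set Implicit Arguments. Unset Strict Implicit. Unset Printing Implicit Defensive.

Section Graphs.
Variables (V : finType) (e : rel V).

Definition simple_graph : Prop := symmetric e /\ irreflexive e.
Definition connected_graph : Prop := forall x y : V, connect e x y.

(* ball n x = vertices reachable from x by a walk of length <= n *)
Definition ball (n : nat) (x : V) : {set V} :=
  iter n (fun S => S :|: [set y | [exists z in S, e z y]]) [set x].

(* shortest-path distance: the least n <= #|V| with y in ball n x
   (for connected graphs this is exactly the graph distance) *)
Definition dist (x y : V) : nat := find (fun n => y \in ball n x) (iota 0 #|V|.+1).

Definition interval (a b w : V) : bool := dist a w + dist w b == dist a b.

Definition is_gate (S : {set V}) (y x : V) : Prop :=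
  x \in S /\ forall w, w \in S -> interval y w x.

Definition gated (S : {set V}) : Prop := forall y, exists x, is_gate S y x.

Definition QC : Prop :=
  forall u v w y : V,
    dist v y = 1 -> dist w y = 1 -> dist v w = 2 ->
    2 <= dist u v -> dist u v = dist u w -> dist u y = (dist u v).+1 ->
    exists z, [/\ dist z v = 1, dist z w = 1 & dist u z = (dist u v).-1].

(* Triangle diamond condition; "adjacent to every vertex x with ..." is read
   as "to every such x different from z" (z itself satisfies the conditions). *)
Definition TDC : Prop :=
  forall u v w : V,
    dist v w = 1 -> 1 < dist u v -> dist u v = dist u w ->
    exists z, [/\ dist z v = 1, dist z w = 1, dist u z = (dist u v).-1,
      (forall x, dist x v = 1 -> dist u x = (dist u v).-1 -> x != z -> e z x) &
      (forall y, dist y w = 1 -> dist u y = (dist u w).-1 -> y != z -> e z y)].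

Definition diamond_weakly_modular : Prop := QC /\ TDC.

End Graphs.

Definition induced (V : finType) (e : rel V) (A : {set V}) : rel {x : V | x \in A} :=
  fun x y => e (val x) (val y).
Arguments induced : clear implicits.

Definition gated_amalgam (V : finType) (e : rel V) (A B : {set V}) : Prop :=
  [/\ gated e A, gated e B, A :|: B = setT, A :&: B != set0 &
      forall x y, x \in A :\: B -> y \in B :\: A -> ~~ e x y].

From mathcomp Require Import all_boot all_order zify.
Set Implicit Arguments. Unset Strict Implicit. Unset Printing Implicit Defensive.

(* Gated sets are convex, hence isometric, so each side of the amalgam
   satisfies (QC) and (TDC) for base points inside it; for a base point u
   outside a gated set S, distances from u to S all factor through the gate
   of u, which shifts both conditions by a constant.  In the amalgam, fix a
   base point u in A.  If the apex y of a (QC) configuration (v, w, y), or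
   the vertex v of a (TDC) configuration (v, w), lies outside A, the whole
   configuration lies in B, because B \ A has no neighbours in A \ B.
   Otherwise it lies in A: a vertex outside A adjacent to some x in A has x
   as its gate, so it is one step farther from u than x, contradicting the
   distance constraints. *)

Section Balls.
Variables (W : finType) (r : rel W).

Lemma in_ballS n x y :
  (y \in ball r n.+1 x) = (y \in ball r n x) || [exists z in ball r n x, r z y].
Proof. by rewrite /ball iterS in_setU inE. Qed.

Lemma ball_subS n x : ball r n x \subset ball r n.+1 x.
Proof. by apply/subsetP => y yn; rewrite in_ballS yn. Qed.

Lemma ball_mono n m x : n <= m -> ball r n x \subset ball r m x.
Proof.
move=> le_nm; rewrite -(subnK le_nm); elim: (m - n) => [|k IHk] //.
exact: subset_trans IHk (ball_subS _ _).
Qed.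

Lemma mem_ball1 x y : r x y -> y \in ball r 1 x.
Proof.
by move=> rxy; rewrite in_ballS; apply/orP; right; apply/existsP; exists x; rewrite inE eqxx.
Qed.

Lemma ball_trans n m x y z :
  y \in ball r n x -> z \in ball r m y -> z \in ball r (n + m) x.
Proof.
move=> yn; elim: m z => [|m IHm] z; first by rewrite addn0 inE => /eqP ->.
rewrite addnS !in_ballS => /orP[/IHm -> // | /existsP[t /andP[tm rtz]]].
by apply/orP; right; apply/existsP; exists t; rewrite IHm.
Qed.

Lemma ball_path x p : path r x p -> last x p \in ball r (size p) x.
Proof.
elim: p x => [|z p IHp] x; first by rewrite inE.
move=> /andP[rxz /IHp zp]; rewrite -[size _]/(1 + size p).
exact: ball_trans (mem_ball1 rxz) zp.
Qed.

Lemma ball_fix k x :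
  ball r k.+1 x = ball r k x -> forall m, k <= m -> ball r m x = ball r k x.
Proof.
move=> fix_k m le_km; rewrite -(subnK le_km); elim: (m - k) => [|j IHj] //.
by rewrite addSn /ball iterS -/(ball r (j + k) x) IHj; apply: fix_k.
Qed.

Lemma card_ball_or_fix n x :
  n < #|ball r n x| \/ exists2 k, k < n & ball r k.+1 x = ball r k x.
Proof.
elim: n => [|n [lt_n|[k lt_kn fix_k]]]; first by left; rewrite cards1.
- have [fix_n|grow_n] := eqVneq (ball r n.+1 x) (ball r n x); first by right; exists n.
  left; apply: leq_ltn_trans lt_n (proper_card _).
  by rewrite properEneq eq_sym grow_n ball_subS.
- by right; exists k => //; apply: ltnW.
Qed.

Lemma ball_stable n x : ball r n x \subset ball r #|W| x.
Proof.
have [lt_card|[k lt_k fix_k]] := card_ball_or_fix #|W| x.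
  by have := leq_trans lt_card (max_card _); rewrite ltnn.
have [le_n|lt_n] := leqP n #|W|; first exact: ball_mono.
by rewrite (ball_fix fix_k (ltnW (ltn_trans lt_k lt_n))) (ball_fix fix_k (ltnW lt_k)).
Qed.

Lemma dist_le n x y : y \in ball r n x -> dist r x y <= n.
Proof.
move=> yn; have ym : y \in ball r (minn n #|W|) x.
  by rewrite /minn; case: ltnP => // _; apply: (subsetP (ball_stable n x)).
rewrite /dist; suff: find (fun k => y \in ball r k x) (iota 0 #|W|.+1) <= minn n #|W|.
  by lia.
rewrite leqNgt; apply/negP => /(before_find 0).
by rewrite nth_iota ?add0n ?ym //; lia.
Qed.

Lemma mem_ball_dist n x y : y \in ball r n x -> y \in ball r (dist r x y) x.
Proof.
move=> /(subsetP (ball_stable n x)) yW.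
have has_y : has (fun k => y \in ball r k x) (iota 0 #|W|.+1).
  by apply/hasP; exists #|W| => //; rewrite mem_iota; lia.
have := nth_find 0 has_y; rewrite nth_iota ?add0n //.
by move: has_y; rewrite has_find size_iota.
Qed.

End Balls.

Section ConnectedGraph.
Variables (V : finType) (e : rel V).
Hypotheses (e_sym : symmetric e) (e_irr : irreflexive e) (e_conn : connected_graph e).
Local Notation d := (dist e).

Lemma leq_dist_ball n x y : (d x y <= n) = (y \in ball e n x).
Proof.
have y_dist : y \in ball e (d x y) x.
  have /connectP[p p_path ->] := e_conn x y.
  exact: mem_ball_dist (ball_path p_path).
apply/idP/idP => [le_dn|]; last exact: dist_le.
exact: subsetP (ball_mono e x le_dn) _ y_dist.
Qed.

Lemma dist_eq0 x y : (d x y == 0) = (x == y).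
Proof. by rewrite -leqn0 leq_dist_ball inE eq_sym. Qed.

Lemma dist0_eq x y : d x y = 0 -> x = y.
Proof. by move/eqP; rewrite dist_eq0 => /eqP. Qed.

Lemma dist_triangle x y z : d x z <= d x y + d y z.
Proof. by rewrite leq_dist_ball; apply: ball_trans; rewrite -leq_dist_ball. Qed.

Lemma ball_sym n x y : y \in ball e n x -> x \in ball e n y.
Proof.
elim: n y => [|n IHn] y; first by rewrite !inE eq_sym.
rewrite in_ballS => /orP[/IHn | /existsP[z /andP[zn ezy]]].
  exact: subsetP (ball_subS e n y) x.
by rewrite -add1n; apply: ball_trans (IHn _ zn); apply: mem_ball1; rewrite e_sym.
Qed.

Lemma dist_sym x y : d x y = d y x.
Proof.
by apply/eqP; rewrite eqn_leq !leq_dist_ball; apply/andP; split; apply: ball_sym;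
  rewrite -leq_dist_ball.
Qed.

Lemma dist1P x y : reflect (d x y = 1) (e x y).
Proof.
apply: (iffP idP) => [exy | dxy1].
  have : d x y <= 1 by rewrite leq_dist_ball mem_ball1.
  have : d x y != 0 by rewrite dist_eq0; apply: contraTneq exy => ->; rewrite e_irr.
  lia.
have : y \in ball e 1 x by rewrite -leq_dist_ball dxy1.
have x_neq_y : (x == y) = false by rewrite -dist_eq0 dxy1.
by rewrite in_ballS inE eq_sym x_neq_y => /existsP[z /andP[/set1P <-]].
Qed.

Lemma dist_pred u x k : d u x = k.+1 -> exists2 y, e y x & d u y = k.
Proof.
move=> dux; have : x \in ball e k.+1 u by rewrite -leq_dist_ball dux.
rewrite in_ballS -leq_dist_ball dux ltnn => /existsP[y /andP[yk eyx]].
exists y => //; move: yk; rewrite -leq_dist_ball.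
by have := dist_triangle u y x; rewrite dux (dist1P _ _ eyx); lia.
Qed.

Definition convex (S : {set V}) : Prop :=
  forall a b x, a \in S -> b \in S -> d a x + d x b = d a b -> x \in S.

Lemma convex_closer_nbr S u v x : convex S -> u \in S -> v \in S ->
  0 < d u v -> d x v = 1 -> d u x = (d u v).-1 -> x \in S.
Proof. by move=> cS uS vS duv dxv dux; apply: cS uS vS _; lia. Qed.

Lemma gate_dist S y g : is_gate e S y g -> forall w, w \in S -> d y g + d g w = d y w.
Proof. by move=> [_ gate_g] w /gate_g /eqP. Qed.

Lemma gated_convex S : gated e S -> convex S.
Proof.
move=> gS a b x aS bS dabx; have [g gx] := gS x.
have := gate_dist gx aS; have := gate_dist gx bS; have := dist_triangle a g b.
rewrite (dist_sym a g) (dist_sym a x) in dabx * => dab dxb dxa.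
have /dist0_eq-> : d x g = 0 by lia.
by case: gx.
Qed.

Lemma gated_nbr_dist S u x y : gated e S -> u \in S -> x \in S -> y \notin S ->
  e x y -> d u y = (d u x).+1.
Proof.
move=> gS uS xS yS exy; have [g gy] := gS y.
have dyx : d y x = 1 by apply/dist1P; rewrite e_sym.
have dyg : d y g != 0 by rewrite dist_eq0; apply: contraNneq yS => ->; case: gy.
have /dist0_eq gx : d g x = 0 by have := gate_dist gy xS; lia.
by rewrite dist_sym -(gate_dist gy uS) gx dyx dist_sym.
Qed.

Section ConvexSubgraph.
Variable S : {set V}.
Hypothesis S_convex : convex S.
Local Notation T := {x : V | x \in S}.
Local Notation eS := (induced V e S).

Lemma ball_induced n (a x : T) : x \in ball eS n a -> val x \in ball e n (val a).
Proof.
elim: n x => [|n IHn] x; first by rewrite !inE => /eqP ->.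
rewrite !in_ballS => /orP[/IHn -> // | /existsP[z /andP[zn ezx]]].
by apply/orP; right; apply/existsP; exists (val z); rewrite IHn.
Qed.

Lemma induced_ball_dist k (a b : T) : d (val a) (val b) = k -> b \in ball eS k a.
Proof.
elim: k b => [|k IHk] b.
  by move/eqP; rewrite dist_eq0 inE => /eqP/val_inj ->.
move=> dab; have [y eyb day] := dist_pred dab.
have yS : y \in S by apply: S_convex (valP a) (valP b) _; rewrite (dist1P _ _ eyb); lia.
rewrite in_ballS; apply/orP; right; apply/existsP; exists (exist _ y yS).
by rewrite IHk.
Qed.

Lemma induced_dist (a b : T) : dist eS a b = d (val a) (val b).
Proof.
have ab := induced_ball_dist (erefl (d (val a) (val b))).
apply/eqP; rewrite eqn_leq (dist_le ab) leq_dist_ball.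
exact/ball_induced/(mem_ball_dist ab).
Qed.

End ConvexSubgraph.

Definition qc_at (u v w y : V) : Prop :=
  d v y = 1 -> d w y = 1 -> d v w = 2 ->
  2 <= d u v -> d u v = d u w -> d u y = (d u v).+1 ->
  exists z, [/\ d z v = 1, d z w = 1 & d u z = (d u v).-1].

Definition tdc_at (u v w : V) : Prop :=
  d v w = 1 -> 1 < d u v -> d u v = d u w ->
  exists z, [/\ d z v = 1, d z w = 1, d u z = (d u v).-1,
    (forall x, d x v = 1 -> d u x = (d u v).-1 -> x != z -> e z x) &
    (forall y, d y w = 1 -> d u y = (d u w).-1 -> y != z -> e z y)].

Lemma qc_at_convex S u v w y : convex S -> QC (induced V e S) ->
  u \in S -> v \in S -> w \in S -> y \in S -> qc_at u v w y.
Proof.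
move=> cS qcS uS vS wS yS.
have := qcS (exist _ u uS) (exist _ v vS) (exist _ w wS) (exist _ y yS).
rewrite !(induced_dist cS) /= => qc_uvwy dvy dwy dvw duv duvw duy.
have [z] := qc_uvwy dvy dwy dvw duv duvw duy.
by rewrite !(induced_dist cS) /=; exists (val z).
Qed.

Lemma tdc_at_convex S u v w : convex S -> TDC (induced V e S) ->
  u \in S -> v \in S -> w \in S -> tdc_at u v w.
Proof.
move=> cS tdcS uS vS wS.
have := tdcS (exist _ u uS) (exist _ v vS) (exist _ w wS).
rewrite !(induced_dist cS) /= => tdc_uvw dvw duv duvw.
have [z] := tdc_uvw dvw duv duvw.
rewrite !(induced_dist cS) /= => -[dzv dzw duz near_v near_w].
exists (val z); split=> // [x dxv dux xz | x dxw dux xz].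
- have xS := convex_closer_nbr cS uS vS (ltnW duv) dxv dux.
  by apply: (near_v (exist _ x xS)); rewrite ?(induced_dist cS).
- have duw : 0 < d u w by rewrite -duvw ltnW.
  have xS := convex_closer_nbr cS uS wS duw dxw dux.
  by apply: (near_w (exist _ x xS)); rewrite ?(induced_dist cS).
Qed.

Lemma qc_at_gated S u v w y : gated e S -> QC (induced V e S) ->
  v \in S -> w \in S -> y \in S -> qc_at u v w y.
Proof.
move=> gS qcS vS wS yS dvy dwy dvw duv duvw duy.
have [p up] := gS u; have pS : p \in S by case: up.
have upv := gate_dist up vS; have upw := gate_dist up wS; have upy := gate_dist up yS.
have [dpv|] := leqP 2 (d p v).
  have dpvw : d p v = d p w by lia.
  have dpy : d p y = (d p v).+1 by lia.
  have [z [dzv dzw dpz]] :=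
    qc_at_convex (gated_convex gS) qcS pS vS wS yS dvy dwy dvw dpv dpvw dpy.
  have dpzv : d p z + d z v = d p v by lia.
  have zS := gated_convex gS pS vS dpzv.
  by exists z; split=> //; have := gate_dist up zS; lia.
(* Here d p v = d p w <= 1, and d p v = 0 would force v = p = w. *)
rewrite ltnS => dpv_le1; have := dist_triangle v p w; rewrite (dist_sym v p) => dvpw.
by exists p; split; lia.
Qed.

Lemma tdc_at_gated S u v w : gated e S -> TDC (induced V e S) -> v \in S -> w \in S ->
  (forall x, d x v = 1 -> d u x = (d u v).-1 -> x \in S) ->
  (forall x, d x w = 1 -> d u x = (d u w).-1 -> x \in S) -> tdc_at u v w.
Proof.
move=> gS tdcS vS wS closer_v closer_w dvw duv duvw.
have [p up] := gS u; have pS : p \in S by case: up.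
have upv := gate_dist up vS; have upw := gate_dist up wS.
have dpvw : d p v = d p w by lia.
have [dpv|] := ltnP 1 (d p v).
  have [z [dzv dzw dpz near_v near_w]] :=
    tdc_at_convex (gated_convex gS) tdcS pS vS wS dvw dpv dpvw.
  have dpzv : d p z + d z v = d p v by lia.
  have upz := gate_dist up (gated_convex gS pS vS dpzv).
  exists z; split=> // [|x dxv dux|x dxw dux]; first by lia.
  - by apply: near_v; have := gate_dist up (closer_v x dxv dux); lia.
  - by apply: near_w; have := gate_dist up (closer_w x dxw dux); lia.
move=> dpv_le1; have := dist_triangle v p w; rewrite (dist_sym v p) => dvpw.
exists p; split=> // [|||x dxv dux|x dxw dux]; try lia.
- have /dist0_eq-> : d p x = 0 by have := gate_dist up (closer_v x dxv dux); lia.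
  by rewrite eqxx.
- have /dist0_eq-> : d p x = 0 by have := gate_dist up (closer_w x dxw dux); lia.
  by rewrite eqxx.
Qed.

Section Amalgam.
Variables A B : {set V}.
Hypothesis AB : gated_amalgam e A B.

Lemma amalgam_sym : gated_amalgam e B A.
Proof.
case: AB => gA gB AUB AIB no_cross; split; rewrite 1?setUC 1?setIC //.
by move=> x y xB yA; rewrite e_sym; apply: no_cross.
Qed.

Lemma amalgam_cover x : x \notin A -> x \in B.
Proof.
case: AB => _ _ AUB _ _ xA.
by have := in_setT x; rewrite -AUB inE (negbTE xA).
Qed.

Lemma amalgam_nbr x y : x \notin A -> e x y -> y \in B.
Proof.
case: AB => _ _ AUB _ no_cross xA exy; apply: contraT => yB.
have yA : y \in A by have := in_setT y; rewrite -AUB inE (negbTE yB) orbF.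
have := no_cross y x; rewrite !inE yA yB xA (amalgam_cover xA) e_sym exy.
by move=> /(_ isT isT).
Qed.

Lemma qc_at_amalgam u v w y : u \in A ->
  QC (induced V e A) -> QC (induced V e B) -> qc_at u v w y.
Proof.
move=> uA qcA qcB dvy dwy dvw duv duvw duy; case: AB => gA gB _ _ _.
have eyv : e y v by apply/dist1P; rewrite dist_sym.
have eyw : e y w by apply/dist1P; rewrite dist_sym.
have [yA|yA] := boolP (y \in A).
  have vA : v \in A by apply: contraT => vA; have := gated_nbr_dist gA uA yA vA eyv; lia.
  have wA : w \in A by apply: contraT => wA; have := gated_nbr_dist gA uA yA wA eyw; lia.
  exact: qc_at_gated gA qcA vA wA yA dvy dwy dvw duv duvw duy.
have vB := amalgam_nbr yA eyv; have wB := amalgam_nbr yA eyw.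
exact: qc_at_gated gB qcB vB wB (amalgam_cover yA) dvy dwy dvw duv duvw duy.
Qed.

Lemma tdc_at_amalgam u v w : u \in A ->
  TDC (induced V e A) -> TDC (induced V e B) -> tdc_at u v w.
Proof.
move=> uA tdcA tdcB dvw duv duvw; case: AB => gA gB _ _ _.
have evw : e v w by apply/dist1P.
have ewv : e w v by rewrite e_sym.
have [vA|vA] := boolP (v \in A).
  have wA : w \in A by apply: contraT => wA; have := gated_nbr_dist gA uA vA wA evw; lia.
  apply: (tdc_at_gated gA tdcA vA wA) => // x dxv dux.
    by apply: (convex_closer_nbr (gated_convex gA) uA vA) dxv dux; lia.
  by apply: (convex_closer_nbr (gated_convex gA) uA wA) dxv dux; lia.
have wA : w \notin A by apply/negP => wA; have := gated_nbr_dist gA uA wA vA ewv; lia.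
apply: (tdc_at_gated gB tdcB (amalgam_cover vA) (amalgam_cover wA)) => // x /dist1P exv _.
  by apply: (amalgam_nbr vA); rewrite e_sym.
by apply: (amalgam_nbr wA); rewrite e_sym.
Qed.

End Amalgam.

End ConnectedGraph.

Theorem theorem2 (V : finType) (e : rel V) (A B : {set V}) :
  simple_graph e -> connected_graph e ->
  gated_amalgam e A B ->
  diamond_weakly_modular (induced V e A) ->
  diamond_weakly_modular (induced V e B) ->
  diamond_weakly_modular e.
Proof.
move=> [e_sym e_irr] e_conn AB [qcA tdcA] [qcB tdcB].
have BA := amalgam_sym e_sym AB.
split=> [u v w y | u v w]; have [uA|/(amalgam_cover AB) uB] := boolP (u \in A).
- exact: (qc_at_amalgam e_sym e_irr e_conn AB uA qcA qcB).
- exact: (qc_at_amalgam e_sym e_irr e_conn BA uB qcB qcA).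
- exact: (tdc_at_amalgam e_sym e_irr e_conn AB uA tdcA tdcB).
- exact: (tdc_at_amalgam e_sym e_irr e_conn BA uB tdcB tdcA).
Qed.
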